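(* Let $H_P$ be a Hermitian operator on a finite-dimensional Hilbert space with orthonormal eigenbasis $\{|\phi_m\rangle\}_{m=0}^{D-1}$, $H_P|\phi_m\rangle = E_m|\phi_m\rangle$, with $E_0 < E_1 \le E_m$ for all $m\ge1$. Let $\tilde E_0,\tilde E_1\in\mathbb{R}$ and $\delta M_0,\delta M_1>0$ satisfy $|\tilde E_0 - E_0| < \delta M_0$ and $|\tilde E_1 - E_1| < \delta M_1$. Let $|\psi\rangle$ be a normalized state and write $|\psi\rangle = \sqrt{1-\epsilon^2}\,|\phi_0\rangle + \sum_{m\neq0}\epsilon_m|\phi_m\rangle$ with real $\epsilon_m$, $\epsilon^2=\sum_{m\ne0}\epsilon_m^2$. If $$\langle\psi|H_P|\psi\rangle < \tfrac12(\tilde E_0+\tilde E_1) - \tfrac12(\delta M_0+\delta M_1),$$ then $\epsilon^2 \le \tfrac12$, and consequently $\bigl(\langle\psi|H_P|\psi\rangle - E_0\bigr)^2 \le \Delta E^2$, where $\Delta E^2 = \langle\psi|H_P^2|\psi\rangle - \langle\psi|H_P|\psi\rangle^2$.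
   Context: $\tilde E_0,\tilde E_1$ are approximate (pre-estimated) values of the ground and first excited energies $E_0,E_1$, with error bounds $\delta M_0,\delta M_1$. *)

From HB Require Import structures.
From mathcomp Require Import all_boot all_order all_algebra.
Set Implicit Arguments. Unset Strict Implicit. Unset Printing Implicit Defensive.
Import Order.TTheory GRing.Theory Num.Theory.
Local Open Scope ring_scope.

Definition adjointmx {C : numClosedFieldType} {m n : nat} (A : 'M[C]_(m, n))
  : 'M[C]_(n, m) := map_mx (fun z => z^*) A^T.

Definition hermitian_op {C : numClosedFieldType} {n : nat} (A : 'M[C]_n) : Prop :=
  adjointmx A = A.

Definition expect_val {C : numClosedFieldType} {n : nat} (A : 'M[C]_n) (psi : 'cV[C]_n) : C :=
  (adjointmx psi *m A *m psi) ord0 ord0.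

From HB Require Import structures.
From mathcomp Require Import all_boot all_order all_algebra ring.
Import Order.TTheory GRing.Theory Num.Theory.
Local Open Scope ring_scope.

(* Write psi = phi c in the orthonormal eigenbasis phi of the Hermitian H.
   Then <psi|H|psi> and <psi|H^2|psi> are the mean X and second moment of
   the eigenvalues E_i under the probability weights w_i = |c_i|^2, and the
   excited weight eps^2 equals 1 - w_0.  The theorem is thus a statement
   about a finite probability distribution on the real values E_i:
   - since E_i - E_0 >= E_1 - E_0 for i <> 0, X - E_0 >= (1 - w_0)(E_1 - E_0);
     the hypothesis on X together with the estimates of E_0, E_1 gives
     X - E_0 < (E_1 - E_0)/2, hence 1 - w_0 < 1/2;
   - for any index j, Var >= (4 w_j - 1) (X - E_j)^2 (evaluate the identity
     sum_i w_i (E_i - c)^2 = Var + (X - c)^2 at c = 2X - E_j and drop all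
     terms but the j-th), so w_0 >= 1/2 yields (X - E_0)^2 <= Var. *)

Definition wmean {R : numDomainType} {I : finType} (w f : I -> R) : R :=
  \sum_i w i * f i.

Definition wvar {R : numDomainType} {I : finType} (w f : I -> R) : R :=
  wmean w (fun i => f i ^+ 2) - wmean w f ^+ 2.

Section WeightedMoments.
Context {R : numFieldType} {I : finType} {w f : I -> R}.
Hypothesis w_ge0 : forall i, 0 <= w i.
Hypothesis w_sum1 : \sum_i w i = 1.

Lemma wmean_shift_sq (c : R) :
  wmean w (fun i => (f i - c) ^+ 2) = wvar w f + (wmean w f - c) ^+ 2.
Proof.
rewrite /wvar /wmean.
rewrite (eq_bigr (fun i => w i * f i ^+ 2 + (- 2 * c) * (w i * f i) + c ^+ 2 * w i));
  last by move=> i _; ring.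
by rewrite !big_split /= -!mulr_sumr w_sum1; ring.
Qed.

Lemma wmean_subr (j : I) :
  wmean w f - f j = \sum_(i | i != j) w i * (f i - f j).
Proof.
have -> : wmean w f - f j = \sum_i w i * (f i - f j).
  rewrite (eq_bigr (fun i => w i * f i + (- f j) * w i)); last by move=> i _; ring.
  by rewrite big_split /= -mulr_sumr w_sum1 mulr1.
by rewrite (bigD1 j) //= subrr mulr0 add0r.
Qed.

Lemma wmean_gap {j : I} {g : R} :
  (forall i, i != j -> g <= f i - f j) -> (1 - w j) * g <= wmean w f - f j.
Proof.
move=> gap; have -> : 1 - w j = \sum_(i | i != j) w i.
  by rewrite -w_sum1 (bigD1 j) //= addrAC subrr add0r.
rewrite wmean_subr mulr_suml; apply: ler_sum => i ij.
by rewrite ler_wpM2l ?gap.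
Qed.

Lemma ground_weight_large {j : I} {g : R} :
  0 < g -> (forall i, i != j -> g <= f i - f j) ->
  wmean w f - f j < g / 2 -> 1 - w j < 1 / 2.
Proof.
move=> g_gt0 gap mean_lt; rewrite -(ltr_pM2r g_gt0) mul1r [2^-1 * g]mulrC.
exact: le_lt_trans (wmean_gap gap) mean_lt.
Qed.

Hypothesis f_real : forall i, f i \is Num.real.

Lemma wmean_real : wmean w f \is Num.real.
Proof. by apply: rpred_sum => i _; rewrite rpredM ?f_real ?ger0_real. Qed.

Lemma wvar_ge (j : I) : (4 * w j - 1) * (wmean w f - f j) ^+ 2 <= wvar w f.
Proof.
set X := wmean w f; set c := 2 * X - f j.
have sq_ge0 (x : R) : x \is Num.real -> 0 <= x ^+ 2.
  by move=> xR; exact: real_exprn_even_ge0.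
have cR : c \is Num.real by rewrite rpredB ?rpredM ?rpred_nat ?wmean_real.
have term_ge0 i : 0 <= w i * (f i - c) ^+ 2.
  by rewrite mulr_ge0 // sq_ge0 // rpredB.
have : w j * (f j - c) ^+ 2 <= wmean w (fun i => (f i - c) ^+ 2).
  by rewrite /wmean (bigD1 j) //= lerDl; apply: sumr_ge0 => i _.
rewrite wmean_shift_sq -subr_ge0 => j_term_le; rewrite -subr_ge0.
by have -> : wvar w f - (4 * w j - 1) * (X - f j) ^+ 2
       = wvar w f + (X - c) ^+ 2 - w j * (f j - c) ^+ 2 by rewrite /c; ring.
Qed.

Lemma wvar_ge_dev {j : I} : 1 - w j <= 1 / 2 -> (wmean w f - f j) ^+ 2 <= wvar w f.
Proof.
move=> wj_large; apply: le_trans (wvar_ge j); apply: ler_peMl.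
  by apply: real_exprn_even_ge0; rewrite // rpredB ?wmean_real.
rewrite -subr_ge0.
have -> : 4 * w j - 1 - 1 = 4 * (1 / 2 - (1 - w j)) by field; rewrite ?pnatr_eq0.
by rewrite mulr_ge0 ?ler0n // subr_ge0.
Qed.

End WeightedMoments.

Section Adjoint.
Context {C : numClosedFieldType}.

Lemma adjointmxM m n p (A : 'M[C]_(m, n)) (B : 'M[C]_(n, p)) :
  adjointmx (A *m B) = adjointmx B *m adjointmx A.
Proof.
apply/matrixP => i j; rewrite !mxE rmorph_sum; apply: eq_bigr => k _.
by rewrite !mxE rmorphM mulrC.
Qed.

Lemma adjointmxK m n (A : 'M[C]_(m, n)) : adjointmx (adjointmx A) = A.
Proof. by apply/matrixP => i j; rewrite !mxE conjCK. Qed.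

Lemma adjoint_diag_mx n (d : 'rV[C]_n) :
  adjointmx (diag_mx d) = diag_mx (map_mx (fun z => z^*) d).
Proof.
apply/matrixP => i j; rewrite !mxE eq_sym rmorphMn.
by have [->|] := eqVneq i j.
Qed.

Lemma quadform_diag n (d : 'rV[C]_n) (c : 'cV[C]_n) :
  (adjointmx c *m diag_mx d *m c) 0 0 = \sum_i d 0 i * `|c i 0| ^+ 2.
Proof.
rewrite mul_mx_diag !mxE; apply: eq_bigr => i _; rewrite !mxE normCKC; ring.
Qed.

Lemma mulmx_sum_col m n (A : 'M[C]_(m, n)) (c : 'cV[C]_n) :
  A *m c = \sum_j c j 0 *: col j A.
Proof.
apply: trmx_inj; rewrite trmx_mul mulmx_sum_row raddf_sum /=.
by apply: eq_bigr => j _; rewrite linearZ /= tr_col !mxE.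
Qed.

Lemma mulmx_col_split n m (A : 'M[C]_(m, n.+1)) (a : C) (e : 'I_n.+1 -> C) :
  a *: col 0 A + \sum_(j | j != 0) e j *: col j A
  = A *m \col_j (if j == 0 then a else e j).
Proof.
rewrite mulmx_sum_col [RHS](bigD1 0) //= mxE eqxx; congr (_ + _).
by apply: eq_bigr => j j0; rewrite mxE (negbTE j0).
Qed.

Lemma expect_val_coords {n} {phi M : 'M[C]_n} {d : 'rV[C]_n} :
  adjointmx phi *m M *m phi = diag_mx d ->
  forall c, expect_val M (phi *m c) = \sum_i d 0 i * `|c i 0| ^+ 2.
Proof.
move=> Md c; rewrite /expect_val -quadform_diag -Md.
by rewrite adjointmxM !mulmxA.
Qed.

End Adjoint.

Section Spectral.
Context {C : numClosedFieldType} {n : nat} {H phi : 'M[C]_n} {E : 'I_n -> C}.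
Hypothesis phi_unitary : adjointmx phi *m phi = 1%:M.
Hypothesis phi_eigen : forall m, H *m col m phi = E m *: col m phi.

Let D : 'rV[C]_n := \row_i E i.

Lemma eigen_mx : H *m phi = phi *m diag_mx D.
Proof.
apply/matrixP => i j; rewrite mul_mx_diag !mxE.
have := congr1 (fun v : 'cV[C]_n => v i 0) (phi_eigen j); rewrite !mxE.
by under eq_bigr do rewrite mxE; move=> ->; rewrite mulrC.
Qed.

Lemma diagonalize : adjointmx phi *m H *m phi = diag_mx D.
Proof. by rewrite -mulmxA eigen_mx mulmxA phi_unitary mul1mx. Qed.

Lemma diagonalize_sq : adjointmx phi *m (H *m H) *m phi = diag_mx (\row_i E i ^+ 2).
Proof.
have HHphi : H *m H *m phi = phi *m (diag_mx D *m diag_mx D).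
  by rewrite -mulmxA eigen_mx mulmxA eigen_mx -mulmxA.
rewrite -mulmxA HHphi mulmxA phi_unitary mul1mx mulmx_diag.
by congr diag_mx; apply/rowP => i; rewrite !mxE.
Qed.

(* Eigenvalues of a Hermitian matrix are real: diag E equals its adjoint. *)
Lemma hermitian_eigen_real : hermitian_op H -> forall m, E m \is Num.real.
Proof.
move=> herm m; apply/CrealP.
have := congr1 adjointmx diagonalize.
rewrite !adjointmxM adjointmxK herm mulmxA diagonalize adjoint_diag_mx.
by move/matrixP/(_ m m); rewrite !mxE eqxx !mulr1n.
Qed.

Lemma norm_coords (c : 'cV[C]_n) :
  (adjointmx (phi *m c) *m (phi *m c)) 0 0 = \sum_i `|c i 0| ^+ 2.
Proof.
have unit_diag : adjointmx phi *m 1%:M *m phi = diag_mx (const_mx 1).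
  by rewrite mulmx1 phi_unitary diag_const_mx.
have := expect_val_coords unit_diag c; rewrite /expect_val mulmx1 => ->.
by apply: eq_bigr => i _; rewrite mxE mul1r.
Qed.

End Spectral.

Lemma estimate_midpoint {R : numFieldType} {x0 x1 y0 y1 d0 d1 : R} :
  x0 - y0 \is Num.real -> x1 - y1 \is Num.real ->
  `|x0 - y0| < d0 -> `|x1 - y1| < d1 ->
  (x0 + x1) / 2 - (d0 + d1) / 2 < (y0 + y1) / 2.
Proof.
move=> r0 r1 e0 e1; rewrite -subr_gt0.
have -> : (y0 + y1) / 2 - ((x0 + x1) / 2 - (d0 + d1) / 2)
        = ((d0 - (x0 - y0)) + (d1 - (x1 - y1))) / 2 by field; rewrite ?pnatr_eq0.
rewrite divr_gt0 ?ltr0n // addr_gt0 // subr_gt0.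
  exact: le_lt_trans (real_ler_norm r0) e0.
exact: le_lt_trans (real_ler_norm r1) e1.
Qed.

Theorem mainTheorem3 (C : numClosedFieldType) (n : nat)
  (HP : 'M[C]_n.+2) (phi : 'M[C]_n.+2) (E : 'I_n.+2 -> C)
  (hHerm : hermitian_op HP)
  (hOrth : adjointmx phi *m phi = 1%:M)
  (hEig : forall m : 'I_n.+2, HP *m col m phi = E m *: col m phi)
  (hE01 : E 0 < E 1)
  (hE1m : forall m : 'I_n.+2, m != 0 -> E 1 <= E m)
  (Et0 Et1 dM0 dM1 : C)
  (hEt0 : Et0 \is Num.real) (hEt1 : Et1 \is Num.real)
  (hdM0 : 0 < dM0) (hdM1 : 0 < dM1)
  (hbound0 : `|Et0 - E 0| < dM0) (hbound1 : `|Et1 - E 1| < dM1)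
  (eps : 'I_n.+2 -> C) (hepsR : forall m : 'I_n.+2, eps m \is Num.real)
  (psi : 'cV[C]_n.+2)
  (hpsiN : adjointmx psi *m psi = 1%:M)
  (hpsi : psi = sqrtC (1 - \sum_(m : 'I_n.+2 | m != 0) eps m ^+ 2) *: col 0 phi
               + \sum_(m : 'I_n.+2 | m != 0) eps m *: col m phi)
  (hexp : expect_val HP psi < (Et0 + Et1) / 2 - (dM0 + dM1) / 2) :
  \sum_(m : 'I_n.+2 | m != 0) eps m ^+ 2 <= 1 / 2 /\
  (expect_val HP psi - E 0) ^+ 2 <= expect_val (HP *m HP) psi - (expect_val HP psi) ^+ 2.
Proof.
set S := \sum_(m | m != 0) eps m ^+ 2.
pose c : 'cV[C]_n.+2 := \col_i (if i == 0 then sqrtC (1 - S) else eps i).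
pose w i := `|c i 0| ^+ 2.
have E_real := hermitian_eigen_real hOrth hEig hHerm.
have w_ge0 i : 0 <= w i by rewrite exprn_ge0.
have psi_c : psi = phi *m c by rewrite hpsi mulmx_col_split.
have X_mean : expect_val HP psi = wmean w E.
  rewrite psi_c (expect_val_coords (diagonalize hOrth hEig)).
  by apply: eq_bigr => i _; rewrite mxE mulrC.
have Y_mean : expect_val (HP *m HP) psi = wmean w (fun i => E i ^+ 2).
  rewrite psi_c (expect_val_coords (diagonalize_sq hOrth hEig)).
  by apply: eq_bigr => i _; rewrite mxE mulrC.
have w_sum1 : \sum_i w i = 1.
  by rewrite -(norm_coords hOrth) -psi_c hpsiN mxE.
have S_w : S = 1 - w 0.
  rewrite -w_sum1 (bigD1 0) //= addrC addrK; apply: eq_bigr => i i0.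
  by rewrite /w mxE (negbTE i0) real_normK ?hepsR.
have gap_pos : 0 < E 1 - E 0 by rewrite subr_gt0.
have gap i : i != 0 -> E 1 - E 0 <= E i - E 0 by move=> i0; rewrite lerD2r hE1m.
have mean_lt : wmean w E - E 0 < (E 1 - E 0) / 2.
  have mid := estimate_midpoint (rpredB hEt0 (E_real 0)) (rpredB hEt1 (E_real 1)) hbound0 hbound1.
  have -> : (E 1 - E 0) / 2 = (E 0 + E 1) / 2 - E 0 by field; rewrite ?pnatr_eq0.
  by rewrite ltrD2r -X_mean (lt_trans hexp mid).
have ground_large := ground_weight_large w_ge0 w_sum1 gap_pos gap mean_lt.
split; first by rewrite S_w; exact: ltW.
by rewrite X_mean Y_mean; exact: (wvar_ge_dev w_ge0 w_sum1 E_real (ltW ground_large)).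
Qed.
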